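(* In the $\ell^2$ linear social choice setting (candidates and voters $\ell^2$-normalized), the pure stable lottery rule satisfies $\mathrm{D}(f_{\mathrm{PSLR}})=O(d)$.
   Context: Setting ($\ell^2$ linear social choice). Fix a dimension $d$. An instance consists of $n$ voters and $m$ candidates, each a vector in $\mathbb{R}^d_{\ge 0}$ with Euclidean norm $1$, with every voter vector in $\mathrm{Cone}(C)$ (nonnegative linear combinations of the candidate vectors $C$). Utility $u_v(c)=v^\top c$; voters report consistent rankings (ties arbitrary); $\mathrm{UW}(c)=\sum_v u_v(c)$. A randomized rule outputs a distribution over $C$ based only on the profile. Distortion on an instance: $\max_c\mathrm{UW}(c)/\mathbb{E}_{c\sim f}[\mathrm{UW}(c)]$; $\mathrm{D}(f)$ is the supremum over instances, as a function of $d$. Stable lottery: for a committee $W\subseteq C$ and $c\in C$, $S_c(W)$ is the set of voters ranking $c$ above every member of $W$; a distribution $\mathcal W$ over committees of size $k$ is a stable lottery if $\mathbb{E}_{W\sim\mathcal W}[|S_c(W)|]\le n/k$ for all $c\in C$ (such lotteries exist for every profile). $f_{\mathrm{PSLR}}$: given a stable lottery $\mathcal W$ over committees of size $2d$, choose each $c\in C$ with probability $\frac1{2d}\Pr_{W\sim\mathcal W}[c\in W]$. *)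

From HB Require Import structures.
From mathcomp Require Import all_boot all_order all_algebra.
From mathcomp Require Import perm.
Set Implicit Arguments. Unset Strict Implicit. Unset Printing Implicit Defensive.
Import Order.TTheory GRing.Theory Num.Theory.
Local Open Scope ring_scope.

Section LinearSocialChoice.
Variable R : realFieldType.

Definition dotv (d : nat) (u v : 'rV[R]_d) : R := \sum_(i < d) u 0 i * v 0 i.

Definition unit_nonneg (d : nat) (u : 'rV[R]_d) : Prop :=
  (forall i, 0 <= u 0 i) /\ dotv u u = 1.

Definition in_cone (d m : nat) (C : 'I_m -> 'rV[R]_d) (v : 'rV[R]_d) : Prop :=
  exists lam : 'I_m -> R, (forall c, 0 <= lam c) /\ v = \sum_(c < m) lam c *: C c.

Definition l2_instance (d n m : nat) (V : 'I_n -> 'rV[R]_d) (C : 'I_m -> 'rV[R]_d) : Prop :=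
  (forall c, unit_nonneg (C c)) /\ (forall v, unit_nonneg (V v)) /\
  (forall v, in_cone C (V v)).

Definition util (d n m : nat) (V : 'I_n -> 'rV[R]_d) (C : 'I_m -> 'rV[R]_d) v c : R :=
  dotv (V v) (C c).

Definition UW (d n m : nat) (V : 'I_n -> 'rV[R]_d) (C : 'I_m -> 'rV[R]_d) (c : 'I_m) : R :=
  \sum_(v < n) util V C v c.

(* A profile: voter v's ranking given as a permutation assigning to each candidate
   its position (0 = top). Consistency: strictly higher utility => ranked strictly higher
   (ties broken arbitrarily). *)
Definition consistent (d n m : nat) (V : 'I_n -> 'rV[R]_d) (C : 'I_m -> 'rV[R]_d)
  (sigma : 'I_n -> {perm 'I_m}) : Prop :=
  forall v c c', util V C v c' < util V C v c -> (sigma v c < sigma v c')%N.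

Definition S_set (n m : nat) (sigma : 'I_n -> {perm 'I_m}) (c : 'I_m) (W : {set 'I_m})
  : {set 'I_n} :=
  [set v | [forall w in W, (sigma v c < sigma v w)%N]].

Definition committee_lottery (m k : nat) (L : {ffun {set 'I_m} -> R}) : Prop :=
  (forall W, 0 <= L W) /\ (\sum_W L W = 1) /\ (forall W, L W != 0 -> #|W| = k).

Definition stable_lottery (n m k : nat) (sigma : 'I_n -> {perm 'I_m})
  (L : {ffun {set 'I_m} -> R}) : Prop :=
  committee_lottery k L /\
  forall c, \sum_W L W * (#|S_set sigma c W|)%:R <= n%:R / k%:R.

Definition pslr_prob (d m : nat) (L : {ffun {set 'I_m} -> R}) (c : 'I_m) : R :=
  (2 * d)%:R^-1 * \sum_(W : {set 'I_m} | c \in W) L W.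

End LinearSocialChoice.

From HB Require Import structures.
From mathcomp Require Import all_boot all_order all_algebra.
From mathcomp Require Import perm.
From mathcomp Require Import reals.
From mathcomp Require Import ring lra.

Set Implicit Arguments.
Unset Strict Implicit.
Unset Printing Implicit Defensive.
Import Order.TTheory GRing.Theory Num.Theory.
Local Open Scope ring_scope.

(* Let T be the expected total welfare of a committee W drawn from the stable
   lottery, so that the rule achieves expected welfare T / (2d).
   (1) Every voter v either ranks c below some member w of W, and then
   u_v(c) <= u_v(w), or lies in S_c(W), and then u_v(c) <= 1; averaging over
   W and using stability gives UW(c) <= T + n / (2d) for every c.
   (2) Summing the cone representations of the voters gives
   sum_v v = sum_c mu_c c with sum_c mu_c >= n; splitting sum_c mu_c along
   the d coordinates, each coordinate contributes at most max_c UW(c), so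
   n <= d * max_c UW(c) <= d T + n / 2.
   Hence n / (2d) <= T and UW(c) <= 2T = 4d * T / (2d). *)

Section UnitVectors.
Variables (R : realFieldType) (d : nat).
Implicit Types (u v : 'rV[R]_d).

Lemma dotv_suml (I : finType) (F : I -> 'rV[R]_d) v :
  dotv (\sum_i F i) v = \sum_i dotv (F i) v.
Proof.
rewrite /dotv exchange_big /=; apply: eq_bigr => j _.
by rewrite summxE mulr_suml.
Qed.

Lemma dotvZl a u v : dotv (a *: u) v = a * dotv u v.
Proof. by rewrite /dotv mulr_sumr; apply: eq_bigr => j _; rewrite mxE mulrA. Qed.

Lemma dotv_ge0 u v :
  (forall i, 0 <= u 0 i) -> (forall i, 0 <= v 0 i) -> 0 <= dotv u v.
Proof. by move=> u0 v0; apply: sumr_ge0 => i _; apply: mulr_ge0. Qed.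

Lemma coordM_le_dotv u v j :
  (forall i, 0 <= u 0 i) -> (forall i, 0 <= v 0 i) -> u 0 j * v 0 j <= dotv u v.
Proof.
move=> u0 v0; rewrite /dotv (bigD1 j) //= lerDl.
by apply: sumr_ge0 => i _; apply: mulr_ge0.
Qed.

Lemma unit_nonneg_dotv_le1 u v : unit_nonneg u -> unit_nonneg v -> dotv u v <= 1.
Proof.
case=> _ uu [_ vv].
have : 0 <= \sum_i (u 0 i - v 0 i) ^+ 2 by apply: sumr_ge0 => i _; apply: sqr_ge0.
have -> : \sum_i (u 0 i - v 0 i) ^+ 2 = dotv u u + dotv v v - 2 * dotv u v.
  rewrite /dotv mulr_sumr -big_split -sumrB /=; apply: eq_bigr => i _; ring.
rewrite uu vv; lra.
Qed.

Lemma unit_nonneg_coord_le1 u i : unit_nonneg u -> u 0 i <= 1.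
Proof.
case=> u0 uu; have := coordM_le_dotv i u0 u0; rewrite uu.
have := u0 i; nra.
Qed.

Lemma unit_nonneg_dim_gt0 u : unit_nonneg u -> (0 < d)%N.
Proof.
by case: d u => [|//] u [_]; rewrite /dotv big_ord0 => /eqP; rewrite eq_sym oner_eq0.
Qed.

End UnitVectors.

Section ConeWeights.
Variables (R : realFieldType) (d m : nat) (C : 'I_m -> 'rV[R]_d).
Hypothesis C_unit : forall c, unit_nonneg (C c).

Lemma cone_weight_ge1 (lam : 'I_m -> R) v :
  (forall c, 0 <= lam c) -> unit_nonneg v -> v = \sum_c lam c *: C c ->
  1 <= \sum_c lam c.
Proof.
move=> lam0 v_unit vE; have [_ <-] := v_unit.
rewrite {1}vE dotv_suml; apply: ler_sum => c _.
by rewrite dotvZl ler_piMr // unit_nonneg_dotv_le1.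
Qed.

(* Each coordinate j carries the weight G j := sum_c mu_c (C c)_j^2, and
   s_j * G j = sum_c (mu_c (C c)_j) (s_j (C c)_j) <= M s_j, since
   s_j (C c)_j <= <s, C c> <= M. *)
Lemma cone_weight_le_dim (mu : 'I_m -> R) (M : R) :
  (forall c, 0 <= mu c) -> 0 <= M ->
  (forall a, dotv (\sum_c mu c *: C c) (C a) <= M) ->
  \sum_c mu c <= d%:R * M.
Proof.
move=> mu0 M0 hM; set s := \sum_c mu c *: C c.
have C0 c j : 0 <= C c 0 j by case: (C_unit c).
have sE j : s 0 j = \sum_c mu c * C c 0 j.
  by rewrite summxE; apply: eq_bigr => c _; rewrite mxE.
have s0 j : 0 <= s 0 j by rewrite sE; apply: sumr_ge0 => c _; apply: mulr_ge0.
pose G j := \sum_c mu c * (C c 0 j * C c 0 j).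
have G_le_s j : G j <= s 0 j.
  rewrite sE; apply: ler_sum => c _; rewrite mulrA ler_piMr ?mulr_ge0 //.
  exact: unit_nonneg_coord_le1.
have sG_le_sM j : s 0 j * G j <= s 0 j * M.
  rewrite /G {2}sE mulr_sumr mulr_suml; apply: ler_sum => c _.
  have -> : s 0 j * (mu c * (C c 0 j * C c 0 j)) =
            (mu c * C c 0 j) * (s 0 j * C c 0 j) by ring.
  rewrite ler_wpM2l ?mulr_ge0 //.
  by apply: le_trans (hM c); apply: coordM_le_dotv.
have G_le_M j : G j <= M.
  have [sj0|sj_neq0] := eqVneq (s 0 j) 0; first by rewrite (le_trans (G_le_s j)) ?sj0.
  by rewrite -(ler_pM2l (_ : 0 < s 0 j)) // lt_def sj_neq0 s0.
have -> : \sum_c mu c = \sum_j G j.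
  rewrite /G exchange_big /=; apply: eq_bigr => c _.
  by rewrite -mulr_sumr; case: (C_unit c) => _; rewrite /dotv => ->; rewrite mulr1.
by rewrite (le_trans (ler_sum _ (fun j _ => G_le_M j))) // sumr_const card_ord mulr_natl.
Qed.

End ConeWeights.

Section Welfare.
Variables (R : realFieldType) (d n m : nat).
Variables (V : 'I_n -> 'rV[R]_d) (C : 'I_m -> 'rV[R]_d).
Hypothesis inst : l2_instance V C.

Lemma util_ge0 v c : 0 <= util V C v c.
Proof. by case: inst => C_unit [V_unit _]; apply: dotv_ge0; [case: (V_unit v) | case: (C_unit c)]. Qed.

Lemma util_le1 v c : util V C v c <= 1.
Proof. by case: inst => C_unit [V_unit _]; apply: unit_nonneg_dotv_le1. Qed.

Lemma UW_ge0 c : 0 <= UW V C c.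
Proof. by apply: sumr_ge0 => v _; apply: util_ge0. Qed.

Lemma UW_dotv_sum c : UW V C c = dotv (\sum_v V v) (C c).
Proof. by rewrite dotv_suml. Qed.

Lemma voters_le_dim_max_UW (M : R) :
  0 <= M -> (forall c, UW V C c <= M) -> n%:R <= d%:R * M.
Proof.
move=> M0 hM; have [C_unit [V_unit V_cone]] := inst.
have [lam lamP] := fin_all_exists V_cone.
pose mu c := \sum_v lam v c.
have lam0 v c : 0 <= lam v c by case: (lamP v).
have sumV : \sum_v V v = \sum_c mu c *: C c.
  rewrite (eq_bigr _ (fun v _ => proj2 (lamP v))) exchange_big /=.
  by apply: eq_bigr => c _; rewrite scaler_suml.
apply: le_trans (_ : \sum_c mu c <= _); last first.
  apply: cone_weight_le_dim => // [c|a]; first by apply: sumr_ge0.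
  by rewrite -sumV -UW_dotv_sum.
rewrite exchange_big /= -[n in n%:R]card_ord -sumr_const; apply: ler_sum => v _.
by apply: (cone_weight_ge1 C_unit (lam0 v) (V_unit v)); case: (lamP v).
Qed.

Section Committees.
Variable sigma : 'I_n -> {perm 'I_m}.
Hypothesis cons : consistent V C sigma.

Lemma util_le_committee v c (W : {set 'I_m}) :
  util V C v c <= \sum_(w in W) util V C v w + (v \in S_set sigma c W)%:R.
Proof.
have W0 : 0 <= \sum_(w in W) util V C v w by apply: sumr_ge0 => w _; apply: util_ge0.
have [_|] := boolP (v \in S_set sigma c W).
  by have := util_le1 v c; rewrite /=; lra.
rewrite inE negb_forall => /existsP [w]; rewrite negb_imply => /andP [wW not_above].
have cw : util V C v c <= util V C v w.
  by rewrite leNgt; apply/negP => /cons; rewrite (negbTE not_above).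
rewrite addr0 (bigD1 w) //= (le_trans cw) // lerDl.
by apply: sumr_ge0 => w' _; apply: util_ge0.
Qed.

Lemma UW_le_committee c (W : {set 'I_m}) :
  UW V C c <= \sum_(w in W) UW V C w + #|S_set sigma c W|%:R.
Proof.
apply: le_trans (ler_sum _ (fun v _ => util_le_committee v c W)) _.
rewrite big_split /= exchange_big lerD //.
by rewrite -sum1_card natr_sum [X in _ <= X]big_mkcond; apply: ler_sum => v _; case: (v \in _).
Qed.

Lemma UW_le_stable_lottery k (L : {ffun {set 'I_m} -> R}) c :
  stable_lottery k sigma L ->
  UW V C c <= \sum_W L W * \sum_(w in W) UW V C w + n%:R / k%:R.
Proof.
case=> [[L0 [L1 _]] stable].
have -> : UW V C c = \sum_W L W * UW V C c by rewrite -mulr_suml L1 mul1r.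
apply: (@le_trans _ _ (\sum_W L W * (\sum_(w in W) UW V C w + #|S_set sigma c W|%:R))).
  by apply: ler_sum => W _; rewrite ler_wpM2l // UW_le_committee.
by rewrite (eq_bigr _ (fun W _ => mulrDr _ _ _)) big_split lerD2l.
Qed.

End Committees.
End Welfare.

Lemma pslr_expectation (R : realFieldType) d m (L : {ffun {set 'I_m} -> R})
    (F : 'I_m -> R) :
  \sum_c pslr_prob d L c * F c = (2 * d)%:R^-1 * \sum_W L W * \sum_(w in W) F w.
Proof.
rewrite /pslr_prob.
under eq_bigr do rewrite -mulrA mulr_suml.
rewrite -mulr_sumr; congr (_ * _).
rewrite (exchange_big_dep xpredT) //=; apply: eq_bigr => W _.
by rewrite mulr_sumr.
Qed.

Theorem theorem18 (R : realType) :
  exists K : R, forall (d n m : nat) (V : 'I_n -> 'rV[R]_d) (C : 'I_m -> 'rV[R]_d)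
    (sigma : 'I_n -> {perm 'I_m}) (L : {ffun {set 'I_m} -> R}),
    l2_instance V C ->
    consistent V C sigma ->
    stable_lottery (2 * d) sigma L ->
    forall c : 'I_m,
      UW V C c <= K * d%:R * \sum_(c' < m) pslr_prob d L c' * UW V C c'.
Proof.
exists 4 => d n m V C sigma L inst cons stable c.
have d_gt0 : (0 < d)%N by case: inst => C_unit _; apply: unit_nonneg_dim_gt0 (C_unit c).
have [[L0 _] _] := stable.
set T := \sum_W L W * \sum_(w in W) UW V C w.
have T0 : 0 <= T.
  by apply: sumr_ge0 => W _; rewrite mulr_ge0 // sumr_ge0 // => w _; apply: UW_ge0.
have UW_le a : UW V C a <= T + n%:R / (2 * d)%:R.
  exact (UW_le_stable_lottery inst cons a stable).
have voters : n%:R <= d%:R * (T + n%:R / (2 * d)%:R).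
  by apply (voters_le_dim_max_UW inst); rewrite ?addr_ge0 ?divr_ge0.
have := UW_le c; rewrite pslr_expectation -/T.
move: voters; rewrite natrM; have : 0 < d%:R :> R by rewrite ltr0n.
set D := d%:R; set y := n%:R / (2 * D) => D_gt0 voters UW_c.
have nE : n%:R = 2 * D * y by rewrite /y; field; lra.
have -> : 4 * D * ((2 * D)^-1 * T) = 2 * T by field; lra.
rewrite nE in voters; nra.
Qed.
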